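(* Let $f_1,\dots,f_n:\mathbb{R}^d\to\mathbb{R}$ be such that each $f_i$ is $L_i$-smooth and $\mu_i$-strongly convex with minimizer $x_i$. Let $\alpha\in(0,1)$ and $\tilde f(x) = \frac{1}{n}\sum_{i=1}^n f_i(\alpha x + (1-\alpha)x_i)$, with minimizer $x^*$. Let $\overline{\mu} = \frac{1}{n}\sum_i\mu_i$. Then \[ \frac{1}{n}\sum_{i=1}^n\|x_i - x^*\|^2 \leq \frac{\max_i L_i}{\overline{\mu}}\max_{i,j}\|x_i - x_j\|^2. \]
   Context: A differentiable $g$ is $L$-smooth if $\|\nabla g(x)-\nabla g(y)\|\leq L\|x-y\|$ for all $x,y$, and $\mu$-strongly convex if $g(x)\geq g(y)+\langle\nabla g(y),x-y\rangle+\frac{\mu}{2}\|x-y\|^2$ for all $x,y$. *)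

From HB Require Import structures.
From mathcomp Require Import all_boot all_order all_algebra.
From mathcomp Require Import all_classical all_reals all_analysis.
Set Implicit Arguments. Unset Strict Implicit. Unset Printing Implicit Defensive.
Import Order.TTheory GRing.Theory Num.Theory.
Import numFieldNormedType.Exports.
Local Open Scope ring_scope.

Section Defs.
Variables (R : realType) (d : nat).

(* Euclidean inner product and Euclidean norm on R^d (the library's default
   norm on matrices is the max-norm, so we define the Euclidean one). *)
Definition dotv (u v : 'rV[R]_d) : R := \sum_(j < d) u 0 j * v 0 j.
Definition enorm (u : 'rV[R]_d) : R := Num.sqrt (dotv u u).

Definition grad (f : 'rV[R]_d -> R) (x : 'rV[R]_d) : 'rV[R]_d :=
  \row_(j < d) ('d f x (delta_mx 0 j : 'rV[R]_d)).

Definition L_smooth (L : R) (f : 'rV[R]_d -> R) : Prop :=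
  forall x y, enorm (grad f x - grad f y) <= L * enorm (x - y).

Definition strongly_convex (mu : R) (f : 'rV[R]_d -> R) : Prop :=
  forall x y, f y + dotv (grad f y) (x - y) + mu / 2 * enorm (x - y) ^+ 2 <= f x.

Definition is_minimizer (f : 'rV[R]_d -> R) (x : 'rV[R]_d) : Prop :=
  forall y, f x <= f y.

End Defs.

From HB Require Import structures.
From mathcomp Require Import all_boot all_order all_algebra.
From mathcomp Require Import all_classical all_reals all_analysis.
From mathcomp Require Import ring lra.
Import Order.TTheory GRing.Theory Num.Theory.
Import numFieldNormedType.Exports.
Local Open Scope ring_scope.

(* The averaged objective F y = 1/n sum_i f_i (alpha y + (1 - alpha) x_i) is
   (alpha^2 mubar)-strongly convex, so F (x_i) - F x* >= alpha^2 mubar / 2 |x_i - x*|^2.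
   On the other hand F x* >= 1/n sum_k f_k (x_k), and since grad f_k (x_k) = 0 the
   descent lemma gives f_k (alpha x_i + (1 - alpha) x_k) <= f_k (x_k)
   + L_k alpha^2 / 2 |x_i - x_k|^2, so
   F (x_i) - F x* <= alpha^2 / 2 (max_k L_k) (max_(j,k) |x_j - x_k|^2).
   Comparing the two bounds and averaging over i gives the claim.  Only the two
   inequalities defining smoothness and strong convexity are used: the vanishing of the
   gradient at a minimizer and the descent lemma are derived from them, the latter by
   cutting the segment into N equal steps and letting N grow. *)

Lemma ler_of_forall_add_divn (R : archiRealFieldType) (a c k : R) :
  (forall N : nat, (0 < N)%N -> a <= c + k / N%:R) -> a <= c.
Proof.
move=> h; apply/ler_addgt0Pr => e e_gt0.
pose N := (Num.truncn (`|k| / e)).+1.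
apply: le_trans (h N isT) _; rewrite lerD2l ler_pdivrMr ?ltr0n //.
have : `|k| / e < N%:R := truncnS_gt _.
rewrite ltr_pdivrMr // mulrC => /ltW; exact/le_trans/ler_norm.
Qed.

Lemma ler_of_forall_mul1B (R : realFieldType) (a b : R) :
  (forall t, 0 < t < 1 -> a * (1 - t) <= b) -> a <= b.
Proof.
move=> h; apply/ler_addgt0Pr => e e_gt0.
have a_le := ler_norm a; have a_ge0 := normr_ge0 a.
pose t := e / (`|a| + 2 * e).
have den_gt0 : 0 < `|a| + 2 * e by lra.
have t_gt0 : 0 < t by rewrite divr_gt0.
have t_lt1 : t < 1 by rewrite ltr_pdivrMr // mul1r; lra.
have at_le : a * t <= e by rewrite mulrA ler_pdivrMr //; nra.
have := h t; rewrite t_gt0 t_lt1 => /(_ isT); lra.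
Qed.

Lemma mean_le (R : numFieldType) (n : nat) (a : 'I_n -> R) (c : R) :
  (0 < n)%N -> (forall i, a i <= c) -> n%:R^-1 * \sum_(i < n) a i <= c.
Proof.
move=> n_gt0 a_le; have n_neq0 : n%:R != 0 :> R by rewrite pnatr_eq0 -lt0n.
apply: le_trans (ler_wpM2l _ (ler_sum _ (fun i _ => a_le i))) _.
  by rewrite invr_ge0.
by rewrite sumr_const card_ord -[c *+ n]mulr_natl mulKf.
Qed.

Section Euclidean.
Set Implicit Arguments. Unset Strict Implicit.
Variables (R : realType) (d : nat).
Implicit Types (a : R) (u v w : 'rV[R]_d).

Lemma dotvC u v : dotv u v = dotv v u.
Proof. by apply: eq_bigr => j _; rewrite mulrC. Qed.

Lemma dotvBl u v w : dotv (u - v) w = dotv u w - dotv v w.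
Proof. by rewrite /dotv -sumrB; apply: eq_bigr => j _; rewrite !mxE mulrBl. Qed.

Lemma dotvZl a u v : dotv (a *: u) v = a * dotv u v.
Proof. by rewrite /dotv mulr_sumr; apply: eq_bigr => j _; rewrite !mxE mulrA. Qed.

Lemma dotvZr a u v : dotv u (a *: v) = a * dotv u v.
Proof. by rewrite dotvC dotvZl dotvC. Qed.

Lemma dotv0l v : dotv 0 v = 0.
Proof. by rewrite -(scale0r 0) dotvZl mul0r. Qed.

Lemma dotv_ge0 u : 0 <= dotv u u.
Proof. by apply: sumr_ge0 => j _; rewrite -expr2 sqr_ge0. Qed.

Lemma dotv_eq0 u : (dotv u u == 0) = (u == 0).
Proof.
apply/idP/eqP => [/eqP uu0|->]; last by rewrite dotv0l.
apply/matrixP => i j; rewrite ord1 mxE.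
have /(_ j isT) /eqP := @psumr_eq0P _ _ xpredT (fun k => u 0 k * u 0 k)
  (fun k _ => sqr_ge0 (u 0 k)) uu0.
by rewrite -expr2 sqrf_eq0 => /eqP.
Qed.

Lemma enorm_sq u : enorm u ^+ 2 = dotv u u.
Proof. by rewrite sqr_sqrtr // dotv_ge0. Qed.

Lemma enormZ a u : enorm (a *: u) = `|a| * enorm u.
Proof. by rewrite /enorm dotvZl dotvZr mulrA -expr2 sqrtrM ?sqr_ge0 // sqrtr_sqr. Qed.

Lemma dotv_le_enorm u v : dotv u v <= enorm u * enorm v.
Proof.
set a := enorm u; set b := enorm v.
have a_ge0 : 0 <= a := sqrtr_ge0 _.
have b_ge0 : 0 <= b := sqrtr_ge0 _.
have uu : dotv u u = a ^+ 2 by rewrite enorm_sq.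
have vv : dotv v v = b ^+ 2 by rewrite enorm_sq.
have [a0|a_neq0] := eqVneq a 0.
  have /eqP -> : u == 0 by rewrite -dotv_eq0 uu a0 expr2 mul0r.
  by rewrite dotv0l a0 mul0r.
have [b0|b_neq0] := eqVneq b 0.
  have /eqP -> : v == 0 by rewrite -dotv_eq0 vv b0 expr2 mul0r.
  by rewrite dotvC dotv0l b0 mulr0.
have ab_gt0 : 0 < a * b by rewrite mulr_gt0 // lt0r ?a_neq0 ?b_neq0.
have := dotv_ge0 (b *: u - a *: v).
have -> : dotv (b *: u - a *: v) (b *: u - a *: v) =
    b ^+ 2 * dotv u u - 2 * a * b * dotv u v + a ^+ 2 * dotv v v.
  rewrite /dotv !mulr_sumr -sumrB -big_split /=.
  by apply: eq_bigr => j _; rewrite !mxE; ring.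
rewrite uu vv; nra.
Qed.

End Euclidean.

Section StrongConvexity.
Set Implicit Arguments. Unset Strict Implicit.
Variables (R : realType) (d : nat).
Implicit Types (g : 'rV[R]_d -> R) (x y : 'rV[R]_d).

(* Gradient-free form of strong convexity, stable under affine changes of variable,
   sums and nonnegative scalings. *)
Definition strongly_convex_comb (m : R) g := forall x y t, 0 <= t <= 1 ->
  g (t *: x + (1 - t) *: y)
  <= t * g x + (1 - t) * g y - m / 2 * (t * (1 - t)) * enorm (x - y) ^+ 2.

Lemma strongly_convex_comb_of mu g :
  strongly_convex mu g -> strongly_convex_comb mu g.
Proof.
move=> hg x y t /andP[t0 t1].
set w := t *: x + (1 - t) *: y.
have xw : x - w = (1 - t) *: (x - y) by apply/matrixP => i j; rewrite !mxE; ring.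
have yw : y - w = (- t) *: (x - y) by apply/matrixP => i j; rewrite !mxE; ring.
have t1' : 0 <= 1 - t by rewrite subr_ge0.
have := ler_wpM2l t0 (hg x w); have := ler_wpM2l t1' (hg y w).
rewrite xw yw !enormZ !exprMn !real_normK ?num_real // !dotvZr.
set G := dotv _ _; set Q := enorm _ ^+ 2; nra.
Qed.

Lemma strongly_convex_comb_affine m g a c :
  strongly_convex_comb m g ->
  strongly_convex_comb (a ^+ 2 * m) (fun y => g (a *: y + c)).
Proof.
move=> hg x y t t01 /=.
have -> : a *: (t *: x + (1 - t) *: y) + c
    = t *: (a *: x + c) + (1 - t) *: (a *: y + c).
  by apply/matrixP => i j; rewrite !mxE; ring.
apply: le_trans (hg _ _ _ t01) _.
have -> : a *: x + c - (a *: y + c) = a *: (x - y).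
  by rewrite opprD addrACA subrr addr0 scalerBr.
rewrite enormZ exprMn real_normK ?num_real //; lra.
Qed.

Lemma strongly_convex_comb_sum (I : Type) (r : seq I) (m : I -> R)
    (g : I -> 'rV[R]_d -> R) :
  (forall k, strongly_convex_comb (m k) (g k)) ->
  strongly_convex_comb (\sum_(k <- r) m k) (fun y => \sum_(k <- r) g k y).
Proof.
move=> hg x y t t01; elim: r => [|k r IH]; first by rewrite !big_nil; lra.
by have := lerD (hg k x y t t01) IH; rewrite !big_cons; lra.
Qed.

Lemma strongly_convex_combZ m g c : 0 <= c ->
  strongly_convex_comb m g -> strongly_convex_comb (c * m) (fun y => c * g y).
Proof. by move=> c0 hg x y t t01; have := ler_wpM2l c0 (hg x y t t01); lra. Qed.

Lemma strongly_convex_comb_growth m g xs y :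
  strongly_convex_comb m g -> is_minimizer g xs ->
  m / 2 * enorm (y - xs) ^+ 2 <= g y - g xs.
Proof.
move=> hg hxs; apply: ler_of_forall_mul1B => t /andP[t0 t1].
have t01 : 0 <= t <= 1 by rewrite !ltW.
have h := le_trans (hxs _) (hg y xs t t01).
rewrite -(ler_pM2l t0).
have -> : t * (m / 2 * enorm (y - xs) ^+ 2 * (1 - t))
    = m / 2 * (t * (1 - t)) * enorm (y - xs) ^+ 2 by ring.
lra.
Qed.

End StrongConvexity.

Section Gradient.
Set Implicit Arguments. Unset Strict Implicit.
Variables (R : realType) (d : nat) (L mu : R) (f : 'rV[R]_d -> R).
Hypotheses (hL : L_smooth L f) (hf : strongly_convex mu f) (mu_ge0 : 0 <= mu).

Lemma strongly_convex_grad_le x y : f y + dotv (grad f y) (x - y) <= f x.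
Proof.
apply: le_trans (hf x y); rewrite lerDl.
by rewrite mulr_ge0 ?sqr_ge0 ?divr_ge0.
Qed.

Lemma minimizer_grad_eq0 xk : is_minimizer f xk -> grad f xk = 0.
Proof.
(* A gradient step y = xk - s g with L s <= 1/2: minimality and convexity give
   <grad f y, g> <= 0, smoothness keeps grad f y within L s |g| of g, whence
   |g|^2 <= |g|^2 / 2. *)
move=> hmin; set g := grad f xk.
have [s s_gt0 Ls_le] : exists2 s, 0 < s & L * s <= 2^-1.
  have D_gt0 : 0 < 2 * (`|L| + 1) by have := normr_ge0 L; lra.
  exists (2 * (`|L| + 1))^-1; first by rewrite invr_gt0.
  rewrite ler_pdivrMr // mulKf ?pnatr_eq0 //; have := ler_norm L; lra.
pose y := xk - s *: g.
have xky : xk - y = s *: g by rewrite subKr.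
have gy_g : dotv (grad f y) g <= 0.
  have := strongly_convex_grad_le xk y; rewrite xky dotvZr.
  have := hmin y; rewrite -(pmulr_rle0 _ s_gt0); lra.
have g_gy : dotv (g - grad f y) g <= L * s * dotv g g.
  apply: le_trans (dotv_le_enorm _ _) _.
  have := hL xk y; rewrite xky enormZ gtr0_norm // -/g => h.
  rewrite -enorm_sq expr2 !mulrA ler_wpM2r ?sqrtr_ge0 //.
  by rewrite -mulrA.
have gg_half : dotv g g <= dotv g g / 2.
  rewrite mulrC; apply: le_trans (ler_wpM2r (dotv_ge0 g) Ls_le).
  by apply: le_trans g_gy; rewrite dotvBl lerDl oppr_ge0.
apply/eqP; rewrite -dotv_eq0 eq_le dotv_ge0 andbT.
by move: gg_half; rewrite {1}(splitr (dotv g g)) gerDr pmulr_lle0 ?invr_gt0.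
Qed.

Section Descent.
Variable xk : 'rV[R]_d.
Hypothesis grad_xk : grad f xk = 0.

Lemma smooth_descent_step (v : 'rV[R]_d) (a b : R) : 0 <= a <= b ->
  f (xk + b *: v) - f (xk + a *: v) <= (b - a) * b * L * enorm v ^+ 2.
Proof.
move=> /andP[a_ge0 ab]; have b_ge0 := le_trans a_ge0 ab.
set G := grad f (xk + b *: v).
have Gv_le : (b - a) * dotv G v <= (b - a) * (L * b * enorm v ^+ 2).
  apply: ler_wpM2l; first by rewrite subr_ge0.
  apply: le_trans (dotv_le_enorm _ _) _.
  rewrite expr2 mulrA ler_wpM2r ?sqrtr_ge0 //.
  have -> : L * b * enorm v = L * enorm (xk + b *: v - xk).
    by rewrite addrC addKr enormZ ger0_norm // mulrA.
  by have := hL (xk + b *: v) xk; rewrite grad_xk subr0.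
have := strongly_convex_grad_le (xk + a *: v) (xk + b *: v).
rewrite opprD addrACA subrr add0r -scalerBl dotvZr -/G.
(* Generalizing the atoms keeps lra from comparing them by unfolding the matrix
   arithmetic inside. *)
move: Gv_le; move: (f _) (f _) (dotv G v) => fB fA p; lra.
Qed.

Lemma smooth_descent_steps (v : 'rV[R]_d) (h : R) (m : nat) : 0 <= h ->
  f (xk + (m%:R * h) *: v) - f xk
  <= L * enorm v ^+ 2 * h ^+ 2 * (m * m.+1)%:R / 2.
Proof.
move=> h_ge0; elim: m => [|m IH].
  by rewrite !mul0r scale0r addr0 subrr mul0n !mulr0 mul0r.
have hm : 0 <= m%:R * h <= m.+1%:R * h.
  by rewrite mulr_ge0 ?ler_wpM2r ?ler_nat.
have := lerD (smooth_descent_step v hm) IH; rewrite subrKA.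
suff -> : L * enorm v ^+ 2 * h ^+ 2 * (m.+1 * m.+2)%:R / 2 =
  (m.+1%:R * h - m%:R * h) * (m.+1%:R * h) * L * enorm v ^+ 2
  + L * enorm v ^+ 2 * h ^+ 2 * (m * m.+1)%:R / 2 by [].
by rewrite !natrM -!natr1; field.
Qed.

Lemma smooth_descent z : f z - f xk <= L / 2 * enorm (z - xk) ^+ 2.
Proof.
set c := L / 2 * enorm (z - xk) ^+ 2.
apply: (ler_of_forall_add_divn _ _ _ c) => N N_gt0.
have N_neq0 : N%:R != 0 :> R by rewrite pnatr_eq0 -lt0n.
have step_ge0 : 0 <= N%:R^-1 :> R by rewrite invr_ge0 ler0n.
have := smooth_descent_steps (z - xk) N step_ge0.
rewrite mulfV // scale1r [xk + _]addrC subrK.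
suff -> : L * enorm (z - xk) ^+ 2 * N%:R^-1 ^+ 2 * (N * N.+1)%:R / 2
  = c + c / N%:R by [].
by rewrite /c natrM -natr1; field.
Qed.

End Descent.
End Gradient.

Section AveragedObjective.
Set Implicit Arguments. Unset Strict Implicit.
Variables (R : realType) (d n : nat) (f : 'I_n -> 'rV[R]_d -> R).
Variables (L mu : 'I_n -> R) (x : 'I_n -> 'rV[R]_d) (alpha : R).
Hypotheses (n_gt0 : (0 < n)%N) (hL : forall i, L_smooth (L i) (f i)).
Hypotheses (mu_gt0 : forall i, 0 < mu i).
Hypothesis hf : forall i, strongly_convex (mu i) (f i).
Hypotheses (hx : forall i, is_minimizer (f i) (x i)) (alpha_gt0 : 0 < alpha).

Let F y := n%:R^-1 * \sum_(i < n) f i (alpha *: y + (1 - alpha) *: x i).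
Let mubar := n%:R^-1 * \sum_(i < n) mu i.
Let Lmax := \big[Num.max/0]_(i < n) L i.
Let D := \big[Num.max/0]_(i < n) \big[Num.max/0]_(j < n) enorm (x i - x j) ^+ 2.

Variable xstar : 'rV[R]_d.
Hypothesis hxstar : is_minimizer F xstar.

Lemma averaged_strongly_convex_comb :
  strongly_convex_comb (alpha ^+ 2 * mubar) F.
Proof.
rewrite /mubar mulrCA mulr_sumr.
apply: strongly_convex_combZ; first by rewrite invr_ge0.
apply: strongly_convex_comb_sum => i.
exact/strongly_convex_comb_affine/strongly_convex_comb_of.
Qed.

Lemma averaged_gap_ge i :
  alpha ^+ 2 * mubar / 2 * enorm (x i - xstar) ^+ 2 <= F (x i) - F xstar.
Proof. exact: strongly_convex_comb_growth averaged_strongly_convex_comb hxstar. Qed.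

Lemma averaged_gap_le i : F (x i) - F xstar <= alpha ^+ 2 / 2 * (Lmax * D).
Proof.
rewrite /F -mulrBr -sumrB; apply: mean_le => // k.
have mu_ge0 := ltW (mu_gt0 k).
have grad_xk := minimizer_grad_eq0 (hL k) (hf k) mu_ge0 (hx k).
apply: le_trans (lerB (lexx _) (hx k _)) _.
apply: le_trans (smooth_descent (hL k) (hf k) mu_ge0 grad_xk _) _.
have -> : alpha *: x i + (1 - alpha) *: x k - x k = alpha *: (x i - x k).
  by apply/matrixP => p q; rewrite !mxE; ring.
rewrite enormZ exprMn real_normK ?num_real //.
have -> : L k / 2 * (alpha ^+ 2 * enorm (x i - x k) ^+ 2)
  = alpha ^+ 2 / 2 * (L k * enorm (x i - x k) ^+ 2) by ring.
apply: ler_wpM2l; first by rewrite mulr_ge0 ?sqr_ge0 ?invr_ge0.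
apply: le_trans (ler_wpM2r (sqr_ge0 _) (le_bigmax _ _ k)) _.
apply: ler_wpM2l; first by apply/bigmax_geP; left.
exact: le_trans (le_bigmax _ _ k)
  (le_bigmax _ (fun i => \big[Num.max/0]_(j < n) _) i).
Qed.

Lemma dist_minimizer_le i : enorm (x i - xstar) ^+ 2 <= Lmax / mubar * D.
Proof.
have mubar_gt0 : 0 < mubar.
  rewrite mulr_gt0 ?invr_gt0 ?ltr0n // (bigD1 (Ordinal n_gt0)) //=.
  by rewrite ltr_pwDl ?sumr_ge0 // => j _; apply: ltW.
have := le_trans (averaged_gap_ge i) (averaged_gap_le i).
have -> : alpha ^+ 2 * mubar / 2 * enorm (x i - xstar) ^+ 2
  = alpha ^+ 2 / 2 * (mubar * enorm (x i - xstar) ^+ 2) by ring.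
rewrite ler_pM2l ?divr_gt0 ?exprn_gt0 //.
by move=> h; rewrite mulrAC ler_pdivlMr // mulrC.
Qed.

End AveragedObjective.

Theorem proposition6 (R : realType) (d n : nat)
  (f : 'I_n -> 'rV[R]_d -> R) (L mu : 'I_n -> R) (x : 'I_n -> 'rV[R]_d)
  (alpha : R) (xstar : 'rV[R]_d) :
  (0 < n)%N ->
  (forall i (y : 'rV[R]_d), differentiable (f i) y) ->
  (forall i, L_smooth (L i) (f i)) ->
  (forall i, 0 < mu i) ->
  (forall i, strongly_convex (mu i) (f i)) ->
  (forall i, is_minimizer (f i) (x i)) ->
  0 < alpha < 1 ->
  is_minimizer
    (fun y => (n%:R)^-1 * \sum_(i < n) f i (alpha *: y + (1 - alpha) *: x i))
    xstar ->
  (n%:R)^-1 * \sum_(i < n) enorm (x i - xstar) ^+ 2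
  <= (\big[Num.max/0]_(i < n) L i) / ((n%:R)^-1 * \sum_(i < n) mu i)
     * \big[Num.max/0]_(i < n) \big[Num.max/0]_(j < n) enorm (x i - x j) ^+ 2.
Proof.
move=> n_gt0 _ hL mu_gt0 hf hx /andP[alpha_gt0 _] hxstar.
apply: mean_le => // i.
exact (dist_minimizer_le n_gt0 hL mu_gt0 hf hx alpha_gt0 hxstar i).
Qed.
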